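(* Let $\alpha>0$, $N\ge1$, $f:\mathbb{R}\to(0,\infty)$ with $\sqrt f$ Lipschitz, $f\in C^4(\mathbb{R})$ and $(\sqrt f)^{(k)}$ bounded for $1\le k\le4$, and let $\mu$ be a centered probability measure on $\mathbb{R}$ with finite fourth moment. For $g\in C^2_b(\mathbb{R})$ let $A^Ng(x)=-\alpha xg'(x)+Nf(x)\int_{\mathbb{R}}[g(x+u/\sqrt N)-g(x)]d\mu(u)$. Then there is a constant $C_N>0$ (possibly depending on $N$, but not on $M$ or $g$) such that for all $g\in C^2_b(\mathbb{R})$ and all $M>0$, $$\sup_{x\in[-M,M]}|(A^Ng)'(x)|\le C_N\|g\|_{2,\infty}(1+M^2).$$
   Context: $\|g\|_{2,\infty}=\|g\|_\infty+\|g'\|_\infty+\|g''\|_\infty$. *)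

From HB Require Import structures.
From mathcomp Require Import all_boot all_order all_algebra.
From mathcomp Require Import all_classical all_reals all_analysis.
Set Implicit Arguments. Unset Strict Implicit. Unset Printing Implicit Defensive.
Import Order.TTheory GRing.Theory Num.Theory.
Import numFieldNormedType.Exports.
Local Open Scope classical_set_scope.
Local Open Scope ring_scope.

Definition dern (R : realType) (k : nat) (h : R -> R) : R -> R := derive1n k h.

Definition Ck (R : realType) (k : nat) (h : R -> R) : Prop :=
  (forall j x, (j < k)%N -> derivable (dern j h) x 1) /\ continuous (dern k h).

Definition bounded_fun_R (R : realType) (h : R -> R) : Prop :=
  exists K : R, forall x, `|h x| <= K.

Definition C2b (R : realType) (g : R -> R) : Prop :=
  Ck 2 g /\ forall j, (j <= 2)%N -> bounded_fun_R (dern j g).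

Definition supnorm (R : realType) (h : R -> R) : R :=
  sup [set `|h x| | x in [set: R]].

Definition norm2inf (R : realType) (g : R -> R) : R :=
  supnorm g + supnorm (dern 1 g) + supnorm (dern 2 g).

Definition lipschitz_R (R : realType) (h : R -> R) : Prop :=
  exists L : R, forall x y, `|h x - h y| <= L * `|x - y|.

Definition AN (R : realType) (alpha : R) (N : nat) (f : R -> R)
  (mu : probability R R) (g : R -> R) (x : R) : R :=
  - alpha * x * dern 1 g x
  + N%:R * f x * (\int[mu]_(u in [set: R]) (g (x + u / Num.sqrt (N%:R)) - g x)).

From HB Require Import structures.
From mathcomp Require Import all_boot all_order all_algebra.
From mathcomp Require Import all_classical all_reals all_analysis.
From mathcomp Require Import measurable_realfun ring lra.
Import Order.TTheory GRing.Theory Num.Theory.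
Import numFieldNormedType.Exports.
Local Open Scope classical_set_scope.
Local Open Scope ring_scope.

(* The jump term is the mean of the
   increments u |-> g (x + u / sqrt N) - g x; it may be differentiated under
   the integral sign because the x-derivative of the integrand is dominated by
   2 ||g'||_oo, a constant, hence mu-integrable.  The means of the increments
   of g and g' are bounded by 2 ||g||_oo and 2 ||g'||_oo, while f = (sqrt f)^2
   and f' = 2 sqrt f (sqrt f)' grow at most quadratically because sqrt f is
   Lipschitz with bounded derivative.
   The bound is allowed to depend on N. *)

Lemma is_derive_derive1 {R : realType} {h : R -> R} {x : R} :
  derivable h x 1 -> is_derive x 1 h (derive1 h x).
Proof. by rewrite derive1E; exact: derivableP. Qed.

Lemma derivable_continuous {R : realType} {h : R -> R} :
  (forall x : R, derivable h x 1) -> continuous h.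
Proof. by move=> dh x; apply/differentiable_continuous/derivable1_diffP. Qed.

Section increment_mean.
Context {R : realType} (mu : probability R R).

Lemma bounded_integrable (F : R -> R) :
  measurable_fun setT F -> bounded_fun_R F -> mu.-integrable setT (EFin \o F).
Proof.
move=> mF [K FK]; apply: measurable_bounded_integrable => //.
- by apply: (le_lt_trans (probability_le1 mu measurableT)); rewrite ltry.
- rewrite /bounded_near; near=> M => x _ /=; apply: le_trans (FK x) _.
  by near: M; apply: nbhs_pinfty_ge; exact: num_real.
Unshelve. all: by end_near.
Qed.

Lemma normr_Rintegral_le (F : R -> R) (K : R) :
  measurable_fun setT F -> (forall u, `|F u| <= K) ->
  `|\int[mu]_(u in setT) F u| <= K.
Proof.
move=> mF FK.
have iF : mu.-integrable setT (EFin \o F).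
  by apply: bounded_integrable => //; exists K.
have iK : mu.-integrable setT (EFin \o cst K).
  by apply: bounded_integrable => //; exists `|K| => ?; exact: lexx.
apply: le_trans (le_normr_Rintegral _ iF) _ => //.
apply: le_trans (le_Rintegral _ _ iK _) _ => //; first exact: integrable_norm.
rewrite Rintegral_cst // (_ : fine _ = 1) ?mulr1 //.
exact: (congr1 fine (probability_setT mu)).
Qed.

Definition increment_mean (g : R -> R) (s x : R) : R :=
  \int[mu]_(u in [set: R]) (g (x + u / s) - g x).

Lemma continuous_increment (g : R -> R) (s x : R) : continuous g ->
  continuous (fun u : R => g (x + u / s) - g x).
Proof.
move=> cg u; apply: continuousB; last exact: cst_continuous.
apply: continuous_comp; last exact: cg.
by apply: continuousD; [exact: cst_continuous | exact: mulrr_continuous].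
Qed.

Lemma norm_increment_mean_le (g : R -> R) (s x K : R) :
  continuous g -> (forall z, `|g z| <= K) -> `|increment_mean g s x| <= 2 * K.
Proof.
move=> cg gK; apply: normr_Rintegral_le.
  by apply: continuous_measurable_fun; exact: continuous_increment.
move=> u; apply: le_trans (ler_normB _ _) _.
by have := gK (x + u / s); have := gK x; lra.
Qed.

Lemma is_derive_shift_difference (g : R -> R) (c y : R) :
  (forall z, derivable g z 1) ->
  is_derive y 1 (fun z => g (z + c) - g z) (derive1 g (y + c) - derive1 g y).
Proof.
move=> dg; have dgy := is_derive_derive1 (dg y).
have dshift : is_derive y 1 (fun z => z + c) 1.
  by apply: is_derive_eq; rewrite addr0.
have := @is_derive1_comp R g (fun z => z + c) y _ _
  (is_derive_derive1 (dg (y + c))) dshift.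
by rewrite mulr1 => dgc; exact: is_deriveB.
Qed.

Lemma is_derive_increment_mean (g : R -> R) (s x K0 K1 : R) :
  (forall z, derivable g z 1) -> continuous (derive1 g) ->
  (forall z, `|g z| <= K0) -> (forall z, `|derive1 g z| <= K1) ->
  is_derive x 1 (increment_mean g s) (increment_mean (derive1 g) s x).
Proof.
move=> dg cg' gK0 g'K1.
have cg := derivable_continuous dg.
pose f y u := g (y + u / s) - g y.
have df (y u : R) :
    is_derive y 1 (f ^~ u) (derive1 g (y + u / s) - derive1 g y).
  exact: is_derive_shift_difference.
pose I := `]x - 1, x + 1[%classic.
have Ix : I x by rewrite /I /= in_itv /= ltrBlDr ltrDl ltr01.
have intf (y : R) : I y -> mu.-integrable setT (EFin \o f y).
  move=> _; apply: bounded_integrable.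
    by apply: continuous_measurable_fun; exact: continuous_increment.
  exists (2 * K0) => u; apply: le_trans (ler_normB _ _) _.
  by have := gK0 (y + u / s); have := gK0 y; lra.
have derf1 (y u : R) : I y -> setT u -> derivable (f ^~ u) y 1.
  by move=> _ _; case: (df y u).
have d1f (y u : R) : partial1of2 f y u = derive1 g (y + u / s) - derive1 g y.
  by rewrite partial1of2E; apply: derive_val.
have K1_ge0 : 0 <= K1 by apply: le_trans (g'K1 0).
have intG : mu.-integrable setT (EFin \o cst (2 * K1)).
  by apply: bounded_integrable => //; exists `|2 * K1| => ?; exact: lexx.
have G_ub (y u : R) : I y -> setT u -> `|partial1of2 f y u| <= 2 * K1.
  move=> _ _; rewrite d1f; apply: le_trans (ler_normB _ _) _.
  by have := g'K1 (y + u / s); have := g'K1 y; lra.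
have G_ge0 (u : R) : 0 <= cst (2 * K1) u by rewrite /= mulr_ge0.
split; first exact: (derivable_under_integral measurableT Ix intf derf1
  G_ge0 intG G_ub).
rewrite -derive1E (differentiation_under_integral measurableT Ix intf derf1
  G_ge0 intG G_ub).
by apply: eq_Rintegral => u _; rewrite d1f.
Qed.

End increment_mean.

Section square_of_lipschitz.
Context {R : realType} {f : R -> R}.
Hypothesis f_gt0 : forall x, 0 < f x.
Hypothesis df : forall x, derivable f x 1.

Let sf x := Num.sqrt (f x).

Lemma derive1_sqrt_comp x :
  derive1 sf x = (2 * sf x)^-1 * derive1 f x.
Proof.
have := @is_derive1_comp R Num.sqrt f x _ _
  (is_derive1_sqrt (f_gt0 x)) (is_derive_derive1 (df x)).
by move=> dsf; rewrite derive1E derive_val.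
Qed.

Lemma growth_of_square_of_lipschitz :
  lipschitz_R sf -> bounded_fun_R (derive1 sf) ->
  exists K, 0 <= K /\ forall x, `|f x| + `|derive1 f x| <= K * (1 + `|x|) ^+ 2.
Proof.
move=> [L sfL] [B dsfB].
pose Q := sf 0 + `|L| + `|B|.
have sf_ge0 x : 0 <= sf x by exact: sqrtr_ge0.
have sf_gt0 x : 0 < sf x by rewrite sqrtr_gt0.
exists (3 * Q ^+ 2); split; first by rewrite mulr_ge0 ?sqr_ge0.
move=> x.
have sfx_le : sf x <= Q * (1 + `|x|).
  have := sfL x 0; rewrite subr0 => /(le_trans (ler_norm _)) sfx.
  have LQ : L * `|x| <= Q * `|x|.
    apply: ler_wpM2r => //; apply: le_trans (ler_norm L) _.
    by rewrite /Q; have := sf_ge0 0; have := normr_ge0 B; lra.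
  have := sf_ge0 0; have := normr_ge0 B; have := normr_ge0 L.
  rewrite /Q in LQ *; lra.
have fxE : f x = sf x ^+ 2 by rewrite sqr_sqrtr // ltW.
have dfxE : derive1 f x = 2 * sf x * derive1 sf x.
  by rewrite derive1_sqrt_comp mulrA mulfV ?mul1r // mulf_neq0 // gt_eqF.
have dsfx_le : `|derive1 sf x| <= Q.
  apply: le_trans (dsfB x) _; have := ler_norm B; have := normr_ge0 L.
  by have := sf_ge0 0; rewrite /Q; lra.
rewrite dfxE fxE ger0_norm ?sqr_ge0 // normrM.
rewrite (ger0_norm (mulr_ge0 _ (sf_ge0 x))) //.
have sf2_le : sf x * sf x <= Q * (1 + `|x|) * (Q * (1 + `|x|)).
  exact: ler_pM.
have dsf_le : sf x * `|derive1 sf x| <= Q * (1 + `|x|) * Q by exact: ler_pM.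
have := normr_ge0 x; rewrite !expr2; nra.
Qed.

End square_of_lipschitz.

Section supnorm.
Context {R : realType} {h : R -> R}.
Hypothesis h_bounded : bounded_fun_R h.

Lemma supnorm_ub x : `|h x| <= supnorm h.
Proof.
have [K hK] := h_bounded.
by apply: ub_le_sup; [exists K => _ [y _ <-]; exact: hK | exists x].
Qed.

Lemma supnorm_ge0 : 0 <= supnorm h.
Proof. exact: le_trans (normr_ge0 (h 0)) (supnorm_ub 0). Qed.

End supnorm.

Lemma norm2inf_ge0 {R : realType} (g : R -> R) : C2b g -> 0 <= norm2inf g.
Proof.
move=> [_ gb]; have := supnorm_ge0 (gb 0%N isT).
have := supnorm_ge0 (gb 1%N isT); have := supnorm_ge0 (gb 2%N isT).
by rewrite /norm2inf; lra.
Qed.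

Section generator_derivative.
Context {R : realType} (mu : probability R R) (alpha : R) (N : nat).
Context (f g : R -> R).
Hypothesis df : forall x, derivable f x 1.
Hypothesis g_C2b : C2b g.

Let s := Num.sqrt (N%:R : R).

Let dg (x : R) : derivable g x 1.
Proof. by have [[dgj _] _] := g_C2b; exact: (dgj 0%N). Qed.

Let dg' (x : R) : derivable (derive1 g) x 1.
Proof. by have [[dgj _] _] := g_C2b; exact: (dgj 1%N). Qed.

Let g_bounded j : (j <= 2)%N -> bounded_fun_R (dern j g).
Proof. by have [_ gb] := g_C2b; exact: gb. Qed.

Lemma is_derive_AN (x : R) : is_derive x 1 (AN alpha N f mu g)
  (- alpha * (x * derive1 (derive1 g) x + derive1 g x) +
   N%:R * (f x * increment_mean mu (derive1 g) s x +
           increment_mean mu g s x * derive1 f x)).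
Proof.
have cg' := derivable_continuous dg'.
have [K0 gK0] := g_bounded 0 isT.
have [K1 gK1] := g_bounded 1 isT.
have dP := @is_derive_increment_mean R mu g s x K0 K1 dg cg' gK0 gK1.
have dg'x := is_derive_derive1 (dg' x); have dfx := is_derive_derive1 (df x).
have -> : AN alpha N f mu g = (- alpha) \*: (id * derive1 g) +
    N%:R \*: (f * increment_mean mu g s).
  by apply/funext => y; rewrite /AN !fctE -!mulrA.
by apply: is_derive_eq; rewrite /GRing.scale /= mulr1.
Qed.

Lemma norm_derive_AN_le (x : R) :
  `|derive1 (AN alpha N f mu g) x| <=
  (`|alpha| * (1 + `|x|) + 2 * N%:R * (`|f x| + `|derive1 f x|)) * norm2inf g.
Proof.
have dA := is_derive_AN x; rewrite derive1E derive_val.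
have cg := derivable_continuous dg; have cg' := derivable_continuous dg'.
have S0_ge0 := supnorm_ge0 (g_bounded 0 isT).
have S1_ge0 := supnorm_ge0 (g_bounded 1 isT).
have S2_ge0 := supnorm_ge0 (g_bounded 2 isT).
have g1x := supnorm_ub (g_bounded 1 isT) x.
have g2x := supnorm_ub (g_bounded 2 isT) x.
have P0 := norm_increment_mean_le mu g s x _ cg
  (supnorm_ub (g_bounded 0 isT)).
have P1 := norm_increment_mean_le mu (derive1 g) s x _ cg'
  (supnorm_ub (g_bounded 1 isT)).
rewrite /norm2inf; move: S0_ge0 S1_ge0 S2_ge0 g1x g2x P0 P1; rewrite /dern /=.
set S0 := supnorm g; set S1 := supnorm _; set S2 := supnorm _.
move=> S0_ge0 S1_ge0 S2_ge0 g1x g2x P0 P1.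
set n := S0 + S1 + S2.
have drift : `|x * derive1 (derive1 g) x + derive1 g x| <= (1 + `|x|) * n.
  apply: le_trans (ler_normD _ _) _; rewrite normrM.
  have : `|x| * `|derive1 (derive1 g) x| <= `|x| * S2 by exact: ler_wpM2l.
  by have := normr_ge0 x; rewrite /n; nra.
have jump : `|f x * increment_mean mu (derive1 g) s x +
              increment_mean mu g s x * derive1 f x|
            <= 2 * (`|f x| + `|derive1 f x|) * n.
  apply: le_trans (ler_normD _ _) _; rewrite !normrM.
  have : `|f x| * `|increment_mean mu (derive1 g) s x| <= `|f x| * (2 * S1).
    exact: ler_wpM2l.
  have : `|increment_mean mu g s x| * `|derive1 f x| <= 2 * S0 * `|derive1 f x|.
    exact: ler_wpM2r.
  by have := normr_ge0 (f x); have := normr_ge0 (derive1 f x); rewrite /n; nra.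
apply: le_trans (ler_normD _ _) _.
rewrite !normrM normrN (ger0_norm (ler0n _ N)).
have := ler_wpM2l (normr_ge0 alpha) drift.
have := ler_wpM2l (ler0n R N) jump.
lra.
Qed.

End generator_derivative.

Theorem lemma5p1 (R : realType) (alpha : R) (N : nat) (f : R -> R)
  (mu : probability R R) :
  0 < alpha -> (1 <= N)%N ->
  (forall x, 0 < f x) ->
  lipschitz_R (fun x => Num.sqrt (f x)) ->
  Ck 4 f ->
  (forall k, (1 <= k <= 4)%N -> bounded_fun_R (dern k (fun x => Num.sqrt (f x)))) ->
  mu.-integrable [set: R] (fun u => (u : R)%:E) ->
  (\int[mu]_(u in [set: R]) (u : R) = 0) ->
  (\int[mu]_(u in [set: R]) (`|u| ^+ 4 : R)%:E < +oo)%E ->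
  exists C : R, 0 < C /\
    forall g : R -> R, C2b g ->
    forall M : R, 0 < M ->
    forall x : R, -M <= x <= M ->
      derivable (AN alpha N f mu g) x 1 /\
      `|dern 1 (AN alpha N f mu g) x| <= C * norm2inf g * (1 + M ^+ 2).
Proof.
move=> alpha_gt0 _ f_gt0 sf_lip [df _] sf_bounded _ _ _.
have df1 (x : R) : derivable f x 1 := df 0%N x isT.
have [K [K_ge0 fK]] :=
  growth_of_square_of_lipschitz f_gt0 df1 sf_lip (sf_bounded 1%N isT).
exists (2 * alpha + 4 * N%:R * K); split.
  have := ler0n R N; nra.
move=> g gC2b M M_gt0 x xM.
have dA := is_derive_AN mu alpha N f g df1 gC2b x.
split; first exact: ex_derive.
apply: le_trans (norm_derive_AN_le mu alpha N f g df1 gC2b x) _.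
have {xM} xM : `|x| <= M by rewrite ler_norml.
have growth : `|alpha| * (1 + `|x|) + 2 * N%:R * (`|f x| + `|derive1 f x|)
    <= (2 * alpha + 4 * N%:R * K) * (1 + M ^+ 2).
  have x_le : 1 + `|x| <= 2 * (1 + M ^+ 2)
    by have := normr_ge0 x; have := sqr_ge0 (M - 1); rewrite !expr2; nra.
  have x2_le : (1 + `|x|) ^+ 2 <= 2 * (1 + M ^+ 2)
    by have := normr_ge0 x; have := sqr_ge0 (M - 1); rewrite !expr2; nra.
  have := ler_wpM2l (ltW alpha_gt0) x_le.
  have := ler_wpM2l (mulr_ge0 (ler0n R N) K_ge0) x2_le.
  have := ler_wpM2l (ler0n R N) (fK x).
  by rewrite (gtr0_norm alpha_gt0); lra.
by rewrite [leRHS]mulrAC; apply: ler_wpM2r growth; exact: norm2inf_ge0.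
Qed.
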